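(* Let $X,Y\in\mathcal{P}$ be partitions of a dataset $\mathcal{Z}$ with $m$ elements. The matrix $\mathbf{C}(X,Y)=(m_{pq})_{p,q\in\{0,1\}}$ satisfies: (1) if $X,Y\in\mathcal{P}^+$, then $\mathbf{C}^+(X,Y)=\mathbf{C}(X,Y)$; (2) $m_{pq}\ge0$ for all $p,q\in\{0,1\}$; (3) $\sum_{p,q}m_{pq}=N$, where $N=m(m-1)/2$.
   Context: Let $\mathcal{Z}=\{z_1,\dots,z_m\}$, $1\le\ell\le m$, $\mathcal{X} = \{\mathbf{X}\in[0,1]^{\ell\times m} : \mathbf{X}^T\mathbf{1}_\ell = \mathbf{1}_m\}$, and let $\mathcal{P}=\mathcal{X}/\Pi$ be the set of orbits $X=\{\mathbf{P}\mathbf{X}:\mathbf{P}$ an $\ell\times\ell$ permutation matrix$\}$ (partitions); entry $x_{kj}$ is the membership of $z_j$ in cluster $k$. $\mathcal{P}^+$ is the set of hard partitions, those represented by matrices in $\{0,1\}^{\ell\times m}$; a hard partition $X$ induces the relation $z\sim_X z'$ iff $z,z'$ lie in the same cluster. For hard $X,Y$, $\mathbf{C}^+(X,Y)=(m^+_{pq})$ is the $2\times2$ matrix where $m^+_{11}$, $m^+_{10}$, $m^+_{01}$, $m^+_{00}$ count the 2-element subsets $\{z,z'\}\subseteq\mathcal{Z}$ with, respectively, ($z\sim_Xz'$, $z\sim_Yz'$), ($z\sim_Xz'$, $z\not\sim_Yz'$), ($z\not\sim_Xz'$, $z\sim_Yz'$), ($z\not\sim_Xz'$, $z\not\sim_Yz'$).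 For any $X\in\mathcal{P}$ the compatibility matrix is $\mathbf{C}_X=\mathbf{X}^T\mathbf{X}$ for any representative $\mathbf{X}\in X$. For $m\times m$ matrices $\mathbf{A}=(a_{rs}),\mathbf{B}=(b_{rs})$ let $\chi(\mathbf{A},\mathbf{B})=\sum_{r=1}^m\sum_{s=r+1}^m a_{rs}b_{rs}$, and let $\mathbf{1}$ be the $m\times m$ all-ones matrix. Define $\mathbf{C}(X,Y)=(m_{pq})$ by $m_{11}=\chi(\mathbf{C}_X,\mathbf{C}_Y)$, $m_{10}=\chi(\mathbf{C}_X,\mathbf{1}-\mathbf{C}_Y)$, $m_{01}=\chi(\mathbf{1}-\mathbf{C}_X,\mathbf{C}_Y)$, $m_{00}=\chi(\mathbf{1}-\mathbf{C}_X,\mathbf{1}-\mathbf{C}_Y)$. *)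

From mathcomp Require Import all_boot all_order all_algebra.
Set Implicit Arguments. Unset Strict Implicit. Unset Printing Implicit Defensive.
Import Order.TTheory GRing.Theory Num.Theory.
Local Open Scope ring_scope.

Section Defs.
Variable R : realFieldType.
Variables l m : nat.

(* A matrix representative of a (soft) partition of {z_0,...,z_(m-1)} into l clusters. *)
Definition is_partition (X : 'M[R]_(l, m)) : Prop :=
  (forall k j, 0 <= X k j <= 1) /\ (forall j, \sum_(k < l) X k j = 1).

Definition is_hard (X : 'M[R]_(l, m)) : Prop :=
  forall k j, X k j = 0 \/ X k j = 1.

Definition same_cluster (X : 'M[R]_(l, m)) (i j : 'I_m) : bool :=
  [exists k, (X k i == 1) && (X k j == 1)].

(* C^+(X,Y) : entry (p,q), p,q in {1,0} encoded as true/false; 2-element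
   subsets {z_i, z_j} are enumerated as pairs (i,j) with i < j. *)
Definition Cplus (X Y : 'M[R]_(l, m)) (p q : bool) : nat :=
  #|[set ij : 'I_m * 'I_m | [&& (ij.1 < ij.2)%N,
        same_cluster X ij.1 ij.2 == p & same_cluster Y ij.1 ij.2 == q]]|.

Definition compat (X : 'M[R]_(l, m)) : 'M[R]_m := X^T *m X.

Definition chi (A B : 'M[R]_m) : R :=
  \sum_(r < m) \sum_(s < m | (r < s)%N) A r s * B r s.

Definition onesmx : 'M[R]_m := const_mx 1.

(* C(X,Y) : entry (p,q), p,q in {1,0} encoded as true/false. *)
Definition Cmat (X Y : 'M[R]_(l, m)) (p q : bool) : R :=
  chi (if p then compat X else onesmx - compat X)
      (if q then compat Y else onesmx - compat Y).
End Defs.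

(* The compatibility matrix C_X = X^T X of a partition has entries in [0, 1],
   since C_X r s = sum_k x_kr x_ks is bounded by the column sum sum_k x_kr = 1;
   for a hard partition it is exactly the indicator of z_r ~_X z_s, because a
   column of a hard partition has a single 1.  So each m_pq is a sum of
   products of numbers in [0, 1], and for hard partitions a sum of products of
   indicators, i.e. the count m^+_pq.  Entrywise the four products add up to
   1, so sum_pq m_pq = chi(1, 1) counts the pairs r < s. *)
From mathcomp Require Import all_boot all_order all_algebra.
From mathcomp Require Import ring.
Import Order.TTheory GRing.Theory Num.Theory.
Local Open Scope ring_scope.

Section Compatibility.
Variables (R : realFieldType) (l m : nat) (X : 'M[R]_(l, m)).
Hypothesis partX : is_partition X.

Lemma partition_other_eq0 k0 k r : X k0 r = 1 -> k != k0 -> X k r = 0.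
Proof.
case: partX => X01 Xsum Xk0r kk0.
have : \sum_(i | i != k0) X i r = 0.
  by apply: (addrI 1); rewrite addr0 -{2}(Xsum r) [RHS](bigD1 k0) //= Xk0r.
move/psumr_eq0P; apply=> //.
by move=> i _; case/andP: (X01 i r).
Qed.

Lemma compat_ge0 r s : 0 <= compat X r s.
Proof.
case: partX => X01 _; rewrite mxE; apply: sumr_ge0 => k _; rewrite mxE.
by case/andP: (X01 k r) => ? _; case/andP: (X01 k s) => ? _; apply: mulr_ge0.
Qed.

Lemma compat_le1 r s : compat X r s <= 1.
Proof.
case: partX => X01 Xsum; rewrite mxE -(Xsum r); apply: ler_sum => k _.
rewrite mxE; case/andP: (X01 k r) => ? _; case/andP: (X01 k s) => _ ?.
by rewrite -[leRHS]mulr1 ler_wpM2l.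
Qed.

Lemma onesmx_sub_compat_ge0 r s : 0 <= (onesmx R m - compat X) r s.
Proof. by have := compat_le1 r s; rewrite !mxE subr_ge0. Qed.

Lemma compat_hard r s : is_hard X -> compat X r s = (same_cluster X r s)%:R.
Proof.
move=> hardX; rewrite mxE /same_cluster.
case: existsP => [[k0 /andP[/eqP Xk0r /eqP Xk0s]] | noK].
  rewrite (bigD1 k0) //= !mxE Xk0r Xk0s mulr1 big1 ?addr0 // => k kk0.
  by rewrite mxE (partition_other_eq0 _ _ _ Xk0r kk0) mul0r.
apply: big1 => k _; rewrite mxE.
case: (hardX k r) => [-> | Xkr]; first by rewrite mul0r.
case: (hardX k s) => [-> | Xks]; first by rewrite mulr0.
by case: noK; exists k; rewrite Xkr Xks eqxx.
Qed.

Lemma compat_or_complement_hard (b : bool) : is_hard X ->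
  (if b then compat X else onesmx R m - compat X) =
  \matrix_(r, s) (same_cluster X r s == b)%:R.
Proof.
move=> hardX; apply/matrixP => r s; have compatE := compat_hard r s hardX.
by case: b; rewrite ?(compatE, mxE); case: same_cluster; rewrite ?subrr ?subr0.
Qed.

End Compatibility.

Section PairSums.
Variables (R : realFieldType) (m : nat).

Lemma chi_ge0 (A B : 'M[R]_m) :
  (forall r s, 0 <= A r s) -> (forall r s, 0 <= B r s) -> 0 <= chi A B.
Proof.
move=> A_ge0 B_ge0; apply: sumr_ge0 => r _; apply: sumr_ge0 => s _.
exact: mulr_ge0.
Qed.

Lemma chi_indicator (a b : 'I_m -> 'I_m -> bool) :
  chi (\matrix_(r, s) (a r s)%:R) (\matrix_(r, s) (b r s)%:R) =
  #|[set ij : 'I_m * 'I_m | [&& (ij.1 < ij.2)%N, a ij.1 ij.2 & b ij.1 ij.2]]|%:R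
    :> R.
Proof.
rewrite -sum1_card natr_sum /chi pair_big_dep /= big_mkcond [RHS]big_mkcond.
apply: eq_bigr => -[r s] _; rewrite inE !mxE /=.
by case: (r < s)%N; case: a; case: b; rewrite ?mulr1 ?mulr0.
Qed.

Lemma card_ltn_pairs :
  #|[set ij : 'I_m * 'I_m | (ij.1 < ij.2)%N]| = 'C(m, 2).
Proof.
rewrite -sum1_card (eq_bigl (fun ij : 'I_m * 'I_m => (ij.1 < ij.2)%N)); last by move=> ?; rewrite inE.
rewrite -(pair_big_dep predT (fun r s : 'I_m => (r < s)%N) (fun _ _ => 1%N)) /=.
rewrite (exchange_big_dep predT) //= -bin2_sum big_mkord; apply: eq_bigr => s _.
rewrite -(big_mkord (fun r => (r < s)%N) (fun _ => 1%N)).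
rewrite -(big_nat_widen 0 s m predT (fun _ => 1%N)); last exact: ltnW.
by rewrite sum_nat_const_nat muln1 subn0.
Qed.

Lemma chi_onesmx : chi (onesmx R m) (onesmx R m) = (m * (m - 1))%:R / 2%:R.
Proof.
have -> : onesmx R m = \matrix_(r, s) true%:R by apply/matrixP => r s; rewrite !mxE.
rewrite chi_indicator (eq_card (B := [set ij : 'I_m * 'I_m | (ij.1 < ij.2)%N])); last first.
  by move=> ij; rewrite !inE /= !andbT.
rewrite card_ltn_pairs subn1 -(bin1 m.-1) mul_bin_diag natrM mulrC mulKf //.
by rewrite pnatr_eq0.
Qed.

End PairSums.

Lemma sum_Cmat (R : realFieldType) (l m : nat) (X Y : 'M[R]_(l, m)) :
  \sum_(p : bool) \sum_(q : bool) Cmat X Y p q = chi (onesmx R m) (onesmx R m).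
Proof.
rewrite !big_bool /Cmat /chi /= -!big_split; apply: eq_bigr => r _.
by rewrite -!big_split; apply: eq_bigr => s _; rewrite !mxE /=; ring.
Qed.

Theorem proposition1 (R : realFieldType) (l m : nat) (X Y : 'M[R]_(l, m)) :
  (1 <= l)%N -> (l <= m)%N ->
  is_partition X -> is_partition Y ->
  [/\ (is_hard X -> is_hard Y ->
         forall p q : bool, ((Cplus X Y p q)%:R : R) = Cmat X Y p q),
      (forall p q : bool, 0 <= Cmat X Y p q)
    & \sum_(p : bool) \sum_(q : bool) Cmat X Y p q = (m * (m - 1))%:R / 2%:R].
Proof.
move=> _ _ partX partY; split; last by rewrite sum_Cmat chi_onesmx.
- move=> hardX hardY p q.
  by rewrite /Cmat !compat_or_complement_hard // chi_indicator.
- have selected_ge0 (Z : 'M[R]_(l, m)) (b : bool) r s : is_partition Z ->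
      0 <= (if b then compat Z else onesmx R m - compat Z) r s.
    by move=> partZ; case: b; [apply: compat_ge0 | apply: onesmx_sub_compat_ge0].
  by move=> p q; apply: chi_ge0 => r s; apply: selected_ge0.
Qed.
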